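(* Let $d \geq 2$. Then: (1) for all integers $s_1, \ldots, s_k \geq 1$, $$\frac{s_1}{s_1+\ldots+s_k}\mathsf U_{d,s_1}+\ldots+\frac{s_k}{s_1+\ldots+s_k}\mathsf U_{d,s_k}\subseteq \mathsf U_{d,s_1+\ldots+s_k};$$ (2) for all integers $s, n \geq 1$, $\mathsf U_{d,s} \subseteq \mathsf U_{d,ns}$; (3) for all integers $s,t \geq 1$, $\mathsf U_{d,s}\cap \mathsf U_{d,t} \subseteq \mathsf U_{d,s+t}$.
   Context: For integers $d\ge 2$, $s\ge 1$, a matrix $U\in\mathcal U(ds)$ (unitary $ds\times ds$ complex matrices) is viewed as a $d\times d$ block matrix with blocks $U_{ij}\in M_s(\mathbb C)$. Define $\phi_{d,s}(U)=\big(\tfrac1s\|U_{ij}\|_F^2\big)_{i,j=1}^d$, where $\|X\|_F=\operatorname{Tr}(XX^* )^{1/2}$, and $\mathsf U_{d,s}:=\phi_{d,s}(\mathcal U(ds))$. Sums of sets are Minkowski sums. *)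

From HB Require Import structures.
From mathcomp Require Import all_boot all_order all_algebra.
From mathcomp Require Import complex.
From mathcomp Require Import reals.
Set Implicit Arguments. Unset Strict Implicit. Unset Printing Implicit Defensive.
Import Order.TTheory GRing.Theory Num.Theory.
Local Open Scope ring_scope.

Definition adjmx (R : realType) m n (A : 'M[R[i]]_(m, n)) : 'M[R[i]]_(n, m) :=
  (map_mx (@conjc R) A)^T.

Definition unitary_mx (R : realType) (N : nat) (U : 'M[R[i]]_N) : Prop :=
  U *m adjmx U = 1%:M.

Lemma blk_idx_proof (d s : nat) (i : 'I_d) (a : 'I_s) : (i * s + a < d * s)%N.
Proof.
case: i a => i Hi [a Ha] /=.
have H1 : (i * s + a < i * s + s)%N by rewrite ltn_add2l.
apply: (leq_trans H1); rewrite -mulSnr leq_mul2r; by rewrite Hi orbT.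
Qed.

(* row/column index of entry (a,b) of block (i,j): (i*s + a, j*s + b) *)
Definition blk_idx (d s : nat) (i : 'I_d) (a : 'I_s) : 'I_(d * s) :=
  Ordinal (blk_idx_proof i a).

Definition block_of (R : realType) (d s : nat) (U : 'M[R[i]]_(d * s))
  (i j : 'I_d) : 'M[R[i]]_s :=
  \matrix_(a < s, b < s) U (blk_idx i a) (blk_idx j b).

Definition frob2 (R : realType) n m (X : 'M[R[i]]_(n, m)) : R :=
  \sum_(a < n) \sum_(b < m) (Normc.normc (X a b)) ^+ 2.

Definition phi (R : realType) (d s : nat) (U : 'M[R[i]]_(d * s)) : 'M[R]_d :=
  \matrix_(i < d, j < d) (s%:R^-1 * frob2 (block_of U i j)).

Definition Uset (R : realType) (d s : nat) (M : 'M[R]_d) : Prop :=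
  exists U : 'M[R[i]]_(d * s), unitary_mx U /\ phi U = M.

From HB Require Import structures.
From mathcomp Require Import all_boot all_order all_algebra.
From mathcomp Require Import complex.
From mathcomp Require Import reals.
Import Order.TTheory GRing.Theory Num.Theory.
Local Open Scope ring_scope.
Set Implicit Arguments. Unset Strict Implicit. Unset Printing Implicit Defensive.

(* Write phi U = s^-1 F U with F U = (||U_ij||_F^2)_ij, so that s U_{d,s} is
   the set of all F U with U in U(ds). Given U in U(da) and V in U(db),
   interleave them into W in U(d(a+b)) whose block (i, j) is diag(U_ij, V_ij);
   W is diag(U, V) with rows and columns permuted by the same bijection, hence
   unitary, and F W = F U + F V. Thus s U_{d,s} + t U_{d,t} lies in
   (s + t) U_{d,s+t}, and all three statements are rescalings of this. *)

Section BlockIndex.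
Variables d n : nat.

Lemma blk_row_proof (x : 'I_(d * n)) : (x %/ n < d)%N.
Proof.
case: n x => [|n'] x; first by move: (ltn_ord x); rewrite {2}muln0.
by rewrite ltn_divLR // mulnC.
Qed.

Lemma blk_col_proof (x : 'I_(d * n)) : (x %% n < n)%N.
Proof.
case: n x => [|n'] x; first by move: (ltn_ord x); rewrite {2}muln0.
by rewrite ltn_pmod.
Qed.

Definition blk_pos (x : 'I_(d * n)) : 'I_d * 'I_n :=
  (Ordinal (blk_row_proof x), Ordinal (blk_col_proof x)).

Lemma blk_idxK (i : 'I_d) (a : 'I_n) : blk_pos (blk_idx i a) = (i, a).
Proof.
have n_gt0 : (0 < n)%N by apply: leq_ltn_trans (ltn_ord a).
congr pair; apply: val_inj => /=; last by rewrite modnMDl modn_small.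
by rewrite divnMDl // divn_small // addn0.
Qed.

Lemma blk_posK (x : 'I_(d * n)) : blk_idx (blk_pos x).1 (blk_pos x).2 = x.
Proof. by apply: val_inj; rewrite /= -divn_eq. Qed.

End BlockIndex.

Section DistrIndex.
Variables d a b : nat.

(* Index form of C^d ⊗ (C^a ⊕ C^b) ≅ (C^d ⊗ C^a) ⊕ (C^d ⊗ C^b). *)

Definition distr_idx (x : 'I_(d * (a + b))) : 'I_(d * a + d * b) :=
  let: (i, y) := blk_pos x in
  match split y with
  | inl u => lshift (d * b) (blk_idx i u)
  | inr v => rshift (d * a) (blk_idx i v)
  end.

Definition undistr_idx (w : 'I_(d * a + d * b)) : 'I_(d * (a + b)) :=
  match split w with
  | inl u => let: (i, y) := blk_pos u in blk_idx i (lshift b y)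
  | inr v => let: (i, y) := blk_pos v in blk_idx i (rshift a y)
  end.

Lemma distr_idx_lshift (i : 'I_d) (u : 'I_a) :
  distr_idx (blk_idx i (lshift b u)) = lshift (d * b) (blk_idx i u).
Proof. by rewrite /distr_idx blk_idxK (unsplitK (inl u)). Qed.

Lemma distr_idx_rshift (i : 'I_d) (v : 'I_b) :
  distr_idx (blk_idx i (rshift a v)) = rshift (d * a) (blk_idx i v).
Proof. by rewrite /distr_idx blk_idxK (unsplitK (inr v)). Qed.

Lemma distr_idxK : cancel distr_idx undistr_idx.
Proof.
move=> x; rewrite -(blk_posK x); case: (blk_pos x) => i y /=.
rewrite -(splitK y); case: (split y) => u /=.
  by rewrite distr_idx_lshift /undistr_idx (unsplitK (inl _)) blk_idxK.
by rewrite distr_idx_rshift /undistr_idx (unsplitK (inr _)) blk_idxK.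
Qed.

Lemma undistr_idxK : cancel undistr_idx distr_idx.
Proof.
move=> w; rewrite -(splitK w); case: (split w) => u /=.
  rewrite /undistr_idx (unsplitK (inl _)) -[in RHS](blk_posK u).
  by case: (blk_pos u) => i y; rewrite distr_idx_lshift.
rewrite /undistr_idx (unsplitK (inr _)) -[in RHS](blk_posK u).
by case: (blk_pos u) => i y; rewrite distr_idx_rshift.
Qed.

Lemma distr_idx_bij : bijective distr_idx.
Proof. exact: Bijective distr_idxK undistr_idxK. Qed.

End DistrIndex.

Section Unitary.
Variable R : realType.

Lemma adjmx0 m n : adjmx (0 : 'M[R[i]]_(m, n)) = 0.
Proof. by apply/matrixP => x y; rewrite !mxE conjc0. Qed.

Lemma unitary_mxsub m n (e : 'I_n -> 'I_m) (U : 'M[R[i]]_m) :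
  bijective e -> unitary_mx U -> unitary_mx (mxsub e e U).
Proof.
move=> [e' eK e'K] U_unitary; apply/matrixP => x y.
transitivity ((U *m adjmx U) (e x) (e y)); last first.
  by rewrite U_unitary !mxE (inj_eq (can_inj eK)).
rewrite !mxE (reindex e'); last by apply: onW_bij; exists e.
by apply: eq_bigr => w _; rewrite /adjmx !mxE e'K.
Qed.

Lemma unitary_block_diag a b (U : 'M[R[i]]_a) (V : 'M[R[i]]_b) :
  unitary_mx U -> unitary_mx V -> unitary_mx (block_mx U 0 0 V).
Proof.
rewrite /unitary_mx => UU VV.
have -> : adjmx (block_mx U 0 0 V) = block_mx (adjmx U) 0 0 (adjmx V).
  by rewrite /adjmx map_block_mx tr_block_mx -!/(adjmx _) !adjmx0.
rewrite mulmx_block !mulmx0 !mul0mx !addr0 !add0r UU VV.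
by rewrite -scalar_mx_block.
Qed.

End Unitary.

Section BlockMass.
Variable R : realType.

Lemma frob2_0 m n : frob2 (0 : 'M[R[i]]_(m, n)) = 0.
Proof.
rewrite /frob2 big1 // => x _; rewrite big1 // => y _.
by rewrite mxE Normc.normc0 expr0n.
Qed.

Lemma frob2_block_mx m1 m2 n1 n2 (A : 'M[R[i]]_(m1, n1)) (B : 'M_(m1, n2))
    (C : 'M_(m2, n1)) (D : 'M_(m2, n2)) :
  frob2 (block_mx A B C D) = frob2 A + frob2 B + (frob2 C + frob2 D).
Proof.
rewrite /frob2 big_split_ord /=; congr (_ + _); rewrite -big_split /=;
  apply: eq_bigr => x _; rewrite big_split_ord /=; congr (_ + _);
  by apply: eq_bigr => y _;
     rewrite ?block_mxEul ?block_mxEur ?block_mxEdl ?block_mxEdr.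
Qed.

Variable d : nat.

Definition blk_dsum a b (U : 'M[R[i]]_(d * a)) (V : 'M[R[i]]_(d * b)) :
    'M[R[i]]_(d * (a + b)) :=
  mxsub (@distr_idx d a b) (@distr_idx d a b) (block_mx U 0 0 V).

Lemma block_of_dsum a b (U : 'M[R[i]]_(d * a)) (V : 'M[R[i]]_(d * b)) i j :
  block_of (blk_dsum U V) i j = block_mx (block_of U i j) 0 0 (block_of V i j).
Proof.
apply/matrixP => x y; rewrite [LHS]mxE [LHS]mxE -(splitK x) -(splitK y).
case: (split x) => u; case: (split y) => v;
  by rewrite ?distr_idx_lshift ?distr_idx_rshift
    ?block_mxEul ?block_mxEur ?block_mxEdl ?block_mxEdr ?mxE.
Qed.

Definition blk_mass s (U : 'M[R[i]]_(d * s)) : 'M[R]_d :=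
  \matrix_(i, j) frob2 (block_of U i j).

Lemma phiE s (U : 'M[R[i]]_(d * s)) : phi U = s%:R^-1 *: blk_mass U.
Proof. by apply/matrixP => i j; rewrite !mxE. Qed.

Lemma blk_mass_dsum a b (U : 'M[R[i]]_(d * a)) (V : 'M[R[i]]_(d * b)) :
  blk_mass (blk_dsum U V) = blk_mass U + blk_mass V.
Proof.
apply/matrixP => i j.
by rewrite !mxE block_of_dsum frob2_block_mx !frob2_0 addr0 add0r.
Qed.

Definition Umass s (M : 'M[R]_d) : Prop :=
  exists U : 'M[R[i]]_(d * s), unitary_mx U /\ blk_mass U = M.

Lemma UsetE s (M : 'M[R]_d) :
  (0 < s)%N -> @Uset R d s M <-> Umass s (s%:R *: M).
Proof.
move=> s_gt0; have s_neq0 : s%:R != 0 :> R by rewrite pnatr_eq0 -lt0n.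
split=> -[U [U_unitary UM]]; exists U; split=> //.
  by rewrite -UM phiE scalerA mulfV ?scale1r.
by rewrite phiE UM scalerA mulVf ?scale1r.
Qed.

Lemma Umass0 : Umass 0 0.
Proof.
exists 0; split; last by apply/matrixP => i j; rewrite !mxE /frob2 big_ord0.
by apply/matrixP => x; have := ltn_ord x; rewrite {2}muln0.
Qed.

Lemma Umass_add a b (M N : 'M[R]_d) :
  Umass a M -> Umass b N -> Umass (a + b) (M + N).
Proof.
move=> [U [U_unitary <-]] [V [V_unitary <-]]; exists (blk_dsum U V); split.
  exact/unitary_mxsub/unitary_block_diag/V_unitary/U_unitary/distr_idx_bij.
exact: blk_mass_dsum.
Qed.

Lemma Umass_sum k (s : 'I_k -> nat) (M : 'I_k -> 'M[R]_d) :
  (forall l, Umass (s l) (M l)) -> Umass (\sum_(l < k) s l) (\sum_(l < k) M l).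
Proof.
elim: k s M => [|k IHk] s M sM; first by rewrite !big_ord0; exact: Umass0.
by rewrite !big_ord_recr; apply: Umass_add (IHk _ _ (fun l => sM _)) (sM _).
Qed.

Lemma Uset_convex_sum k (s : 'I_k -> nat) : (0 < k)%N -> (forall l, 0 < s l)%N ->
  forall M : 'I_k -> 'M[R]_d, (forall l, @Uset R d (s l) (M l)) ->
  @Uset R d (\sum_(l < k) s l)%N
    (\sum_(l < k) (((s l)%:R / (\sum_(l' < k) s l')%N%:R) *: M l)).
Proof.
move=> k_gt0 s_gt0 M sM; set S := (\sum_(l < k) s l)%N.
have S_gt0 : (0 < S)%N by rewrite /S (bigD1 (Ordinal k_gt0)) //= addn_gt0 s_gt0.
have S_neq0 : S%:R != 0 :> R by rewrite pnatr_eq0 -lt0n.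
apply/UsetE => //; rewrite scaler_sumr.
under eq_bigr => l _ do rewrite scalerA mulrCA mulfV // mulr1.
by apply: Umass_sum => l; apply/UsetE.
Qed.

Lemma Uset_muln s n : (0 < s)%N -> (0 < n)%N ->
  forall M : 'M[R]_d, @Uset R d s M -> @Uset R d (n * s) M.
Proof.
move=> s_gt0 n_gt0 M /(UsetE _ s_gt0) sM.
apply/UsetE; first by rewrite muln_gt0 n_gt0.
have := Umass_sum (fun _ : 'I_n => sM).
by rewrite sum_nat_const sumr_const !card_ord -scaler_nat scalerA -natrM.
Qed.

Lemma Uset_addn s t : (0 < s)%N -> (0 < t)%N ->
  forall M : 'M[R]_d, @Uset R d s M -> @Uset R d t M -> @Uset R d (s + t) M.
Proof.
move=> s_gt0 t_gt0 M /(UsetE _ s_gt0) sM /(UsetE _ t_gt0) tM.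
apply/UsetE; first by rewrite addn_gt0 s_gt0.
by rewrite natrD scalerDl; apply: Umass_add.
Qed.

End BlockMass.

Theorem corollary2p7 (R : realType) (d : nat) (hd : (2 <= d)%N) :
  (* (1) weighted Minkowski sums *)
  (forall (k : nat) (s : 'I_k -> nat), (0 < k)%N -> (forall l, 0 < s l)%N ->
     forall M : 'I_k -> 'M[R]_d, (forall l, @Uset R d (s l) (M l)) ->
     @Uset R d (\sum_(l < k) s l)%N
       (\sum_(l < k) (((s l)%:R / (\sum_(l' < k) s l')%N%:R) *: M l)))
  /\
  (* (2) U_{d,s} is contained in U_{d,ns} *)
  (forall (s n : nat), (0 < s)%N -> (0 < n)%N ->
     forall M : 'M[R]_d, @Uset R d s M -> @Uset R d (n * s) M)
  /\
  (* (3) U_{d,s} intersected with U_{d,t} is contained in U_{d,s+t} *)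
  (forall (s t : nat), (0 < s)%N -> (0 < t)%N ->
     forall M : 'M[R]_d, @Uset R d s M -> @Uset R d t M -> @Uset R d (s + t) M).
Proof.
split; first exact: (@Uset_convex_sum R d).
split; [exact: (@Uset_muln R d) | exact: (@Uset_addn R d)].
Qed.
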